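(* Let $r \geqslant 5$ be a prime and let $\mathcal{H}_r = \{ (q,d) : r =\frac{q^d-1}{q-1},\ q \text{ a prime power},\ d \geqslant 2 \text{ an integer} \}$. Then $|\mathcal{H}_r| < \log_2 r$. *)

From mathcomp Require Import all_boot.
From Stdlib Require Import Reals.

Definition prime_power (q : nat) : Prop :=
  exists p k : nat, prime p /\ (0 < k)%N /\ q = (p ^ k)%N.

Definition in_Hr (r : nat) (x : nat * nat) : Prop :=
  let: (q, d) := x in
  prime_power q /\ (2 <= d)%N /\ r = ((q ^ d - 1) %/ (q - 1))%N.

Definition log2 (x : R) : R := (ln x / ln 2)%R.

From Pilot Require Import Defs.
From mathcomp Require Import all_boot.
From Stdlib Require Import Reals Lia Lra.
(* Importing Reals rebinds [^] on nat to [Nat.pow] (as in Defs); re-importing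
   ssrnat makes it [expn] again. *)
From mathcomp Require Import ssrnat zify.

(* Since r = 1 + q + ... + q^(d-1), the base q of an element (q, d) of H_r is
   determined by its exponent d (the sum is strictly increasing in q), and
   2^d - 1 <= r because q >= 2.  Hence H_r embeds into the exponents
   2 <= d <= log_2 (r + 1), so 2^(|H_r| + 1) <= r + 1 and 2^|H_r| < r. *)

Lemma homo_expn2r e : {homo expn^~ e : m n / m <= n}.
Proof. by case: e => [|e] m n le_mn; rewrite ?expn0 ?leq_exp2r. Qed.

Lemma leq_geom_sum d : {homo (fun q => \sum_(i < d) q ^ i) : q1 q2 / q1 <= q2}.
Proof. by move=> q1 q2 le_q12; apply: leq_sum => i _; apply: homo_expn2r. Qed.

Lemma ltn_geom_sum d : 1 < d ->
  {homo (fun q => \sum_(i < d) q ^ i) : q1 q2 / q1 < q2}.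
Proof.
move=> d_gt1 q1 q2 lt_q12 /=.
have sum_split q : \sum_(i < d) q ^ i = q + \sum_(i < d | i != Ordinal d_gt1) q ^ i.
  by rewrite (bigD1 (Ordinal d_gt1)).
rewrite !sum_split -addSn.
by apply: leq_add => //; apply: leq_sum => i _; apply/homo_expn2r/ltnW.
Qed.

Lemma geom_sum_divE q d : 1 < q -> (q ^ d - 1) %/ (q - 1) = \sum_(i < d) q ^ i.
Proof. by move=> q_gt1; rewrite subn1 predn_exp -subn1 mulKn // subn_gt0. Qed.

Lemma expn2_le_geom_sum q d : 1 < q -> 2 ^ d <= (\sum_(i < d) q ^ i).+1.
Proof.
move=> q_gt1; apply: (@leq_trans ((2 ^ d).-1).+1); first by rewrite prednK ?expn_gt0.
have -> : (2 ^ d).-1 = \sum_(i < d) 2 ^ i by rewrite predn_exp mul1n.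
by rewrite ltnS; apply: leq_geom_sum.
Qed.

Lemma Nat_powE m n : Nat.pow m n = m ^ n.
Proof. by elim: n => [|n IHn] //=; rewrite multE expnS IHn. Qed.

Lemma prime_power_gt1 q : prime_power q -> 1 < q.
Proof.
case=> p [k [p_pr [k_gt0 ->]]]; rewrite Nat_powE.
by rewrite -(exp1n k) ltn_exp2r // prime_gt1.
Qed.

Lemma in_HrE {r q d} :
  in_Hr r (q, d) -> [/\ 1 < q, 1 < d & r = \sum_(i < d) q ^ i].
Proof.
by case=> /prime_power_gt1 q_gt1 [d_gt1 ->]; rewrite Nat_powE geom_sum_divE.
Qed.

Lemma in_Hr_base_inj {r q1 q2 d} : in_Hr r (q1, d) -> in_Hr r (q2, d) -> q1 = q2.
Proof.
case/in_HrE=> _ d_gt1 ->; case/in_HrE=> _ _.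
exact: (incn_inj (leq_mono (ltn_geom_sum _ d_gt1))).
Qed.

Lemma in_Hr_expn2_le {r q d} : in_Hr r (q, d) -> 2 ^ d <= r.+1.
Proof. by case/in_HrE=> q_gt1 _ ->; apply: expn2_le_geom_sum. Qed.

Lemma in_Hr_uniq_size {r s} : 0 < r -> uniq s -> {in s, forall x, in_Hr r x} ->
  2 ^ (size s).+1 <= r.+1.
Proof.
move=> r_gt0 s_uniq sHr; set K := trunc_log 2 r.+1.
have exps_uniq : uniq (map snd s).
  rewrite map_inj_in_uniq // => -[q1 d1] [q2 d2] /sHr Hr1 /sHr + /= eq_d.
  by rewrite -eq_d => /(in_Hr_base_inj Hr1) ->.
have exps_sub : {subset map snd s <= iota 2 K.-1}.
  move=> d /mapP [[q d'] /sHr Hr /= ->].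
  have [_ d_gt1 _] := in_HrE Hr.
  have := trunc_log_max (isT : 1 < 2) (in_Hr_expn2_le Hr).
  by rewrite mem_iota -/K; lia.
have K_gt0 : 0 < K by apply: trunc_log_max; rewrite ?expn1.
have := uniq_leq_size exps_uniq exps_sub; rewrite size_iota size_map => size_le.
apply: (@leq_trans (2 ^ K)); last exact: trunc_logP.
by rewrite leq_exp2l // -(prednK K_gt0) ltnS.
Qed.

Lemma INR_expn m n : INR (m ^ n) = (INR m ^ n)%R.
Proof. by elim: n => [|n IHn] //=; rewrite expnS -multE mult_INR IHn. Qed.

Lemma log2_gt_of_expn2_lt n r : 2 ^ n < r -> (INR n < log2 (INR r))%R.
Proof.
move=> /ltP /lt_INR; rewrite INR_expn => lt_pow_r.
have ln2_gt0 : (0 < ln 2)%R by have := ln_lt_2; lra.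
have pow_gt0 : (0 < 2 ^ n)%R by apply: pow_lt; lra.
have := ln_increasing _ _ pow_gt0 lt_pow_r; rewrite ln_pow; last lra.
move=> lt_ln; rewrite /log2; apply: (Rmult_lt_reg_r (ln 2)) => //.
by rewrite /Rdiv Rmult_assoc Rinv_l; lra.
Qed.

Theorem lemma3p9 (r : nat) (hr : prime r) (hr5 : (5 <= r)%N)
  (s : seq (nat * nat)) (hs : uniq s) (hH : forall x, x \in s -> in_Hr r x) :
  (INR (size s) < log2 (INR r))%R.
Proof.
apply: log2_gt_of_expn2_lt.
have r_gt1 : 1 < r by apply: leq_trans hr5.
move: (in_Hr_uniq_size (ltnW r_gt1) hs hH); move: (size s) => n.
by rewrite expnS; lia.
Qed.
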